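(* Let $z_n=(0,1/n)$, $n\in\mathbb{N}$, $O=(0,0)$, $K=\{z_n\}_{n\in\mathbb{N}}\cup\{O\}$, $Z=\mathbb{R}^2\setminus K$, and let $\Delta$ be the foliation of $Z$ whose leaves are the connected components of the intersections of $Z$ with horizontal lines $\mathbb{R}\times\{y\}$. Then every leaf of $\Delta$ admits a cross-section through it, but the family of special leaves of $\Delta$ is not locally finite. Consequently there is no striped atlas on $Z$ whose canonical foliation is $\Delta$.
   Context: For a leaf $\omega$ of a foliation $\Delta$ on a surface $Z$, let $J_\omega=[0,1)$ if $\omega\subset\partial Z$ and $J_\omega=(-1,1)$ otherwise; a cross-section through $\omega$ is a continuous map $\gamma:J_\omega\to Z$ with $\gamma(0)\in\omega$ such that $\gamma(s),\gamma(t)$ lie in distinct leaves for $s\ne t$. A subset is saturated if it is a union of leaves; $\hat\omega$ is the intersection of the closures of all saturated neighbourhoods of $\omega$; $\omega$ is special if $\omega\ne\hat\omega$. A striped atlas is a quotient map $q$ from an at most countable disjoint union of strips (sets $S$ with $\mathbb{R}\times(u,v)\subset S\subset\mathbb{R}\times[u,v]$ open in $\mathbb{R}\times[u,v]$) onto $Z$, gluing pairs $X_\gamma,Y_\gamma$ of mutually distinct boundary intervals (components of $S\cap(\mathbb{R}\times\{u,v\})$) via $q(X_\gamma)=q(Y_\gamma)$, injective elsewhere, with $q|_{X_\gamma},q|_{Y_\gamma}$ embeddings with closed images; its canonical foliation has as leaves the images of horizontal lines and boundary intervals of the strips. *)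

From Stdlib Require Import Reals List.
Open Scope R_scope.

Definition pt := (R * R)%type.

(* max-metric on R^2 (induces the usual topology) *)
Definition dist (p q : pt) : R :=
  Rmax (Rabs (fst p - fst q)) (Rabs (snd p - snd q)).

Definition is_open (U : pt -> Prop) : Prop :=
  forall p, U p -> exists eps, eps > 0 /\ forall r, dist p r < eps -> U r.

Definition Kset (p : pt) : Prop :=
  fst p = 0 /\ (snd p = 0 \/ exists n : nat, (1 <= n)%nat /\ snd p = / INR n).

Definition Zset (p : pt) : Prop := ~ Kset p.

(* the connected component containing p of the intersection of A with the
   horizontal line through p (connected subsets of a line = intervals) *)
Definition hcomp (A : pt -> Prop) (p : pt) : pt -> Prop :=
  fun q => A p /\ snd q = snd p /\
    forall x, Rmin (fst p) (fst q) <= x <= Rmax (fst p) (fst q) -> A (x, snd p).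

Definition leaf_of (p : pt) : pt -> Prop := hcomp Zset p.

Definition is_leaf (w : pt -> Prop) : Prop := exists p, Zset p /\ w = leaf_of p.

(* cross-section through w (Z is an open subset of the plane, so it has no
   boundary and J_w = (-1,1)) *)
Definition cross_section (w : pt -> Prop) (g : R -> pt) : Prop :=
  (forall s, -1 < s < 1 -> Zset (g s)) /\
  (forall s, -1 < s < 1 -> forall eps, eps > 0 -> exists del, del > 0 /\
     forall t, -1 < t < 1 -> Rabs (t - s) < del -> dist (g t) (g s) < eps) /\
  w (g 0) /\
  (forall s t, -1 < s < 1 -> -1 < t < 1 -> s <> t -> ~ leaf_of (g s) (g t)).

Definition saturated (A : pt -> Prop) : Prop :=
  (forall p, A p -> Zset p) /\ (forall p r, A p -> leaf_of p r -> A r).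

Definition nbhd_of_set (N w : pt -> Prop) : Prop :=
  exists U, is_open U /\ (forall p, U p -> Zset p) /\
    (forall p, w p -> U p) /\ (forall p, U p -> N p).

Definition closZ (A : pt -> Prop) (z : pt) : Prop :=
  Zset z /\ forall eps, eps > 0 -> exists a, A a /\ dist a z < eps.

Definition hat (w : pt -> Prop) : pt -> Prop :=
  fun z => forall N, saturated N -> nbhd_of_set N w -> closZ N z.

Definition special (w : pt -> Prop) : Prop := w <> hat w.

Definition locally_finite (F : (pt -> Prop) -> Prop) : Prop :=
  forall p, Zset p -> exists eps, eps > 0 /\ exists l : list (pt -> Prop),
    forall w, F w -> (exists r, w r /\ dist p r < eps) -> In w l.

Definition is_strip (u v : R) (S : pt -> Prop) : Prop :=
  u < v /\
  (forall x t, u < t < v -> S (x, t)) /\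
  (forall p, S p -> u <= snd p <= v) /\
  (forall p, S p -> exists eps, eps > 0 /\
     forall r, u <= snd r <= v -> dist p r < eps -> S r).

Definition is_bdry_int (u v : R) (S : pt -> Prop) (B : pt -> Prop) : Prop :=
  exists p, S p /\ (snd p = u \/ snd p = v) /\ B = hcomp S p.

Definition closed_embedding_on (B : pt -> Prop) (f : pt -> pt) : Prop :=
  (forall p p', B p -> B p' -> f p = f p' -> p = p') /\
  (forall p, B p -> forall eps, eps > 0 -> exists del, del > 0 /\
     forall p', B p' -> dist p p' < del -> dist (f p) (f p') < eps) /\
  (forall p, B p -> forall eps, eps > 0 -> exists del, del > 0 /\
     forall p', B p' -> dist (f p) (f p') < del -> dist p p' < eps) /\
  (forall z, Zset z ->
     (forall eps, eps > 0 -> exists p, B p /\ dist (f p) z < eps) ->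
     exists p, B p /\ f p = z).

(* Striped atlas on Z: the disjoint union of the strips S i (i : I, I at most
   countable) is modelled by pairs (i, p) with S i p; q i p is the image of
   (i,p).  The gluing data is a family (X g, Y g), g : G, of boundary
   intervals, each given as (index of the strip, interval). *)
Definition is_striped_atlas (I : Type) (u v : I -> R) (S : I -> pt -> Prop)
    (q : I -> pt -> pt) (G : Type) (X Y : G -> (I * (pt -> Prop))) : Prop :=
  (exists f : I -> nat, forall i j, f i = f j -> i = j) /\
  (forall i, is_strip (u i) (v i) (S i)) /\
  (forall i p, S i p -> Zset (q i p)) /\
  (forall z, Zset z -> exists i p, S i p /\ q i p = z) /\
  (forall U : pt -> Prop, (forall z, U z -> Zset z) ->
     (is_open U <->
      forall i p, S i p -> U (q i p) -> exists eps, eps > 0 /\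
        forall p', S i p' -> dist p p' < eps -> U (q i p'))) /\
  (forall g, is_bdry_int (u (fst (X g))) (v (fst (X g))) (S (fst (X g))) (snd (X g))) /\
  (forall g, is_bdry_int (u (fst (Y g))) (v (fst (Y g))) (S (fst (Y g))) (snd (Y g))) /\
  (forall g g', X g = X g' -> g = g') /\
  (forall g g', Y g = Y g' -> g = g') /\
  (forall g g', X g <> Y g') /\
  (forall g p, snd (X g) p -> exists p', snd (Y g) p' /\
      q (fst (X g)) p = q (fst (Y g)) p') /\
  (forall g p', snd (Y g) p' -> exists p, snd (X g) p /\
      q (fst (X g)) p = q (fst (Y g)) p') /\
  (forall g, closed_embedding_on (snd (X g)) (q (fst (X g)))) /\
  (forall g, closed_embedding_on (snd (Y g)) (q (fst (Y g)))) /\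
  (forall i p j p', S i p -> S j p' -> q i p = q j p' ->
     existT (fun _ => pt) i p <> existT (fun _ => pt) j p' ->
     exists g, (fst (X g) = i /\ snd (X g) p /\ fst (Y g) = j /\ snd (Y g) p') \/
               (fst (Y g) = i /\ snd (Y g) p /\ fst (X g) = j /\ snd (X g) p')).

Definition canonical_leaf (I : Type) (u v : I -> R) (S : I -> pt -> Prop)
    (q : I -> pt -> pt) (w : pt -> Prop) : Prop :=
  (exists i c, u i < c < v i /\ w = (fun z => exists x, q i (x, c) = z)) \/
  (exists i B, is_bdry_int (u i) (v i) (S i) B /\
     w = (fun z => exists p, B p /\ q i p = z)).

(** Vertical segments off the axis {x = 0} meet every leaf and cross the
leaves injectively, so every leaf has a cross-section.  The half-line
{x > 0} × {1/n} is special: just above it lie full horizontal lines, and these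
accumulate on (-1, 1/n).  Since these half-lines accumulate on (1, 0), the
special leaves are not locally finite.

For a striped atlas q, the key fact is that the set of points all of whose
preimages lie in small balls around the preimages of a fixed z0 is open (by the
quotient property, the gluing maps being embeddings).  Hence, if (1, 1/n) had a
preimage p in the interior of a strip, the full lines just above it would lift
to horizontal lines close to p, with their points near (-1, 1/n) lifting close
to the unique interior preimage of (-1, 1/n).  That preimage would then lie at
the height of p, putting (-1, 1/n) on the leaf of (1, 1/n).  So all preimages
of (1, 1/n) lie on boundary intervals.  For large n, close to a preimage of
(1, 0) these boundary intervals are the boundary interval through that
preimage, whose image would be a single leaf through (1, 0) and (1, 1/n). *)

From Stdlib Require Import Reals List Lra Lia Classical FunctionalExtensionality PropExtensionality.
Open Scope R_scope.

Lemma dist_fst_le a b : Rabs (fst a - fst b) <= dist a b.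
Proof. apply Rmax_l. Qed.

Lemma dist_snd_le a b : Rabs (snd a - snd b) <= dist a b.
Proof. apply Rmax_r. Qed.

Lemma dist_triangle a b c : dist a c <= dist a b + dist b c.
Proof.
  unfold dist. apply Rmax_lub.
  - eapply Rle_trans; [|apply Rplus_le_compat; apply Rmax_l].
    replace (fst a - fst c) with ((fst a - fst b) + (fst b - fst c)) by ring.
    apply Rabs_triang.
  - eapply Rle_trans; [|apply Rplus_le_compat; apply Rmax_r].
    replace (snd a - snd c) with ((snd a - snd b) + (snd b - snd c)) by ring.
    apply Rabs_triang.
Qed.

Lemma dist_vertical x y y' : dist (x, y) (x, y') = Rabs (y - y').
Proof.
  unfold dist; simpl. rewrite Rminus_diag, Rabs_R0. apply Rmax_right, Rabs_pos.
Qed.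

Lemma dist_same_height p x : dist p (x, snd p) = Rabs (fst p - x).
Proof.
  unfold dist; simpl. rewrite Rminus_diag, Rabs_R0. apply Rmax_left, Rabs_pos.
Qed.

Lemma between_split a b c x :
  Rmin a c <= x <= Rmax a c ->
  Rmin a b <= x <= Rmax a b \/ Rmin b c <= x <= Rmax b c.
Proof. unfold Rmin, Rmax; repeat destruct Rle_dec; lra. Qed.

Lemma hcomp_refl A a : A a -> hcomp A a a.
Proof.
  intros Ha. split; [exact Ha|]. split; [reflexivity|]. intros x Hx.
  replace x with (fst a) by (unfold Rmin, Rmax in Hx; destruct Rle_dec; lra).
  destruct a; exact Ha.
Qed.

Lemma hcomp_snd A a b : hcomp A a b -> snd b = snd a.
Proof. intros [_ [H _]]; exact H. Qed.

Lemma hcomp_sym A a b : hcomp A a b -> hcomp A b a.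
Proof.
  intros [Ha [Hs Hseg]]. destruct a as [a1 a2], b as [b1 b2]; simpl in *. subst b2.
  split; [apply Hseg; unfold Rmin, Rmax; destruct Rle_dec; lra|].
  split; [reflexivity|]. intros x Hx. apply Hseg.
  rewrite Rmin_comm, Rmax_comm. exact Hx.
Qed.

Lemma hcomp_trans A a b c : hcomp A a b -> hcomp A b c -> hcomp A a c.
Proof.
  intros [Ha [Hs Hseg]] [_ [Hs' Hseg']].
  split; [exact Ha|]. split; [congruence|]. intros x Hx.
  destruct (between_split _ (fst b) _ _ Hx) as [H|H].
  - exact (Hseg x H).
  - rewrite <- Hs. exact (Hseg' x H).
Qed.

Lemma hcomp_mem A a b : hcomp A a b -> A b.
Proof. intros H. apply (hcomp_sym _ _ _ H). Qed.

Lemma hcomp_eq A a b : hcomp A a b -> hcomp A a = hcomp A b.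
Proof.
  intros H. apply functional_extensionality; intro r.
  apply propositional_extensionality. split; intro H'.
  - exact (hcomp_trans _ _ _ _ (hcomp_sym _ _ _ H) H').
  - exact (hcomp_trans _ _ _ _ H H').
Qed.

Lemma bdry_int_mem {a b T B x} :
  is_bdry_int a b T B -> B x -> T x /\ (snd x = a \/ snd x = b).
Proof.
  intros [p [_ [Hs ->]]] Hx. split; [exact (hcomp_mem _ _ _ Hx)|].
  rewrite (hcomp_snd _ _ _ Hx). exact Hs.
Qed.

Lemma bdry_int_eq {a b T B x} : is_bdry_int a b T B -> B x -> B = hcomp T x.
Proof. intros [p [_ [_ ->]]] Hx. exact (hcomp_eq _ _ _ Hx). Qed.

Definition K_height (y : R) : Prop :=
  y = 0 \/ exists n : nat, (1 <= n)%nat /\ y = / INR n.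

Lemma K_height_inv n : (1 <= n)%nat -> K_height (/ INR n).
Proof. intros Hn. right. exists n. split; [exact Hn | reflexivity]. Qed.

Lemma Zset_off_axis x y : x <> 0 -> Zset (x, y).
Proof. intros H [H1 _]. exact (H H1). Qed.

Lemma Zset_off_K_height x y : ~ K_height y -> Zset (x, y).
Proof. intros H [_ H1]. exact (H H1). Qed.

Lemma leaf_of_full_line x x' y : ~ K_height y -> leaf_of (x, y) (x', y).
Proof.
  intros Hy. split; [apply Zset_off_K_height; exact Hy|].
  split; [reflexivity|]. intros t _. apply Zset_off_K_height; exact Hy.
Qed.

Lemma leaf_of_right_half x y x' y' :
  K_height y -> 0 < x -> leaf_of (x, y) (x', y') -> 0 < x'.
Proof.
  intros Hy Hx [_ [_ Hseg]]. simpl in Hseg. apply Rnot_le_lt. intros Hx'.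
  apply (Hseg 0).
  - unfold Rmin, Rmax; destruct Rle_dec; lra.
  - split; [reflexivity | exact Hy].
Qed.

(* the witness is 1/n + t with t < 1/n^2 < 1/(n-1) - 1/n *)
Lemma exists_non_K_height_above n e : (1 <= n)%nat -> 0 < e ->
  exists y, / INR n < y < / INR n + e /\ ~ K_height y.
Proof.
  intros Hn He.
  assert (HN : 1 <= INR n) by (apply (le_INR 1); exact Hn).
  set (a := / INR n).
  assert (Ha : a > 0) by (unfold a; apply Rinv_0_lt_compat; lra).
  assert (HNa : INR n * a = 1) by (unfold a; field; lra).
  set (t := Rmin e (a * a) / 2).
  assert (Ht0 : 0 < t) by (unfold t; apply Rmin_case; nra).
  assert (Ht1 : t < e) by (unfold t; pose proof (Rmin_l e (a * a)); lra).
  assert (Ht2 : t < a * a) by (unfold t; pose proof (Rmin_r e (a * a)); nra).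
  exists (a + t). split; [lra|].
  intros [H0 | [m [Hm Hy]]]; [lra|].
  assert (HM : 1 <= INR m) by (apply (le_INR 1); exact Hm).
  assert (HMy : INR m * (a + t) = 1) by (rewrite Hy; field; lra).
  destruct (Nat.lt_total m n) as [Hlt | [-> | Hgt]].
  - assert (INR m + 1 <= INR n) by (rewrite <- S_INR; apply le_INR; lia). nra.
  - nra.
  - assert (INR n + 1 <= INR m) by (rewrite <- S_INR; apply le_INR; lia). nra.
Qed.

Lemma leaf_eq w a : is_leaf w -> w a -> w = leaf_of a.
Proof. intros [p [_ ->]] H. exact (hcomp_eq _ _ _ H). Qed.

Lemma leaf_has_cross_section w : is_leaf w -> exists g : R -> pt, cross_section w g.
Proof.
  intros [[a b] [Hp ->]].
  set (a' := if Req_EM_T a 0 then 1 else a).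
  assert (Ha' : a' <> 0) by (unfold a'; destruct Req_EM_T; lra).
  exists (fun s => (a', b + s)). split; [|split; [|split]].
  - intros s _. apply Zset_off_axis; exact Ha'.
  - intros s _ e He. exists e. split; [exact He|]. intros t _ Ht.
    rewrite dist_vertical. replace (b + t - (b + s)) with (t - s) by ring. exact Ht.
  - rewrite Rplus_0_r. split; [exact Hp|]. split; [reflexivity|]. simpl.
    intros x Hx. unfold a' in *. destruct Req_EM_T as [E|E].
    + subst a. destruct (Req_EM_T x 0) as [->|Hx0]; [exact Hp|].
      apply Zset_off_axis; exact Hx0.
    + replace x with a by (unfold Rmin, Rmax in Hx; destruct Rle_dec; lra). exact Hp.
  - intros s t _ _ Hst [_ [H _]]. simpl in H. apply Hst. lra.
Qed.

Definition level_leaf (n : nat) : pt -> Prop := leaf_of (1, / INR n).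

Lemma level_leaf_inj n m :
  (1 <= n)%nat -> (1 <= m)%nat -> level_leaf n = level_leaf m -> n = m.
Proof.
  intros Hn Hm E.
  assert (H : level_leaf m (1, / INR n))
    by (rewrite <- E; apply hcomp_refl, Zset_off_axis; lra).
  apply hcomp_snd in H. simpl in H.
  apply INR_eq. rewrite <- (Rinv_inv (INR n)), <- (Rinv_inv (INR m)), H. reflexivity.
Qed.

Lemma hat_level_leaf n : (1 <= n)%nat -> hat (level_leaf n) (-1, / INR n).
Proof.
  intros Hn N [_ Hsat] [U [Uopen [_ [HwU HUN]]]].
  split; [apply Zset_off_axis; lra|]. intros e He.
  assert (HU : U (1, / INR n)) by (apply HwU, hcomp_refl, Zset_off_axis; lra).
  destruct (Uopen _ HU) as [d [Hd Hball]].
  destruct (exists_non_K_height_above n (Rmin e d) Hn) as [y [Hy HK]].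
  { apply Rmin_glb_lt; lra. }
  pose proof (Rmin_l e d). pose proof (Rmin_r e d).
  exists (-1, y). split.
  - apply (Hsat (1, y)); [|apply leaf_of_full_line; exact HK].
    apply HUN, Hball. rewrite dist_vertical. apply Rabs_def1; lra.
  - rewrite dist_vertical. apply Rabs_def1; lra.
Qed.

Lemma level_leaf_special n : (1 <= n)%nat -> special (level_leaf n).
Proof.
  intros Hn E. pose proof (hat_level_leaf n Hn) as H. rewrite <- E in H.
  apply leaf_of_right_half in H; [lra | apply K_height_inv; exact Hn | lra].
Qed.

Lemma fresh_index {T : Type} (f : nat -> T) :
  (forall n m, (1 <= n)%nat -> (1 <= m)%nat -> f n = f m -> n = m) ->
  forall (l : list T) N, exists n, (N <= n)%nat /\ (1 <= n)%nat /\ ~ In (f n) l.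
Proof.
  intros Hinj l. induction l as [|w l IH]; intros N.
  - exists (Nat.max N 1). split; [lia|]. split; [lia|]. simpl; auto.
  - destruct (IH N) as [n1 [H1 [H1' H1'']]].
    destruct (classic (w = f n1)) as [E|E].
    + destruct (IH (S n1)) as [n2 [H2 [H2' H2'']]].
      exists n2. split; [lia|]. split; [lia|]. simpl. intros [E'|E']; [|auto].
      subst w. apply Hinj in E'; lia.
    + exists n1. split; [lia|]. split; [lia|]. simpl. intros [E'|E']; auto.
Qed.

Lemma special_leaves_not_locally_finite :
  ~ locally_finite (fun w => is_leaf w /\ special w).
Proof.
  intros LF. destruct (LF (1, 0)) as [e [He [l Hl]]]; [apply Zset_off_axis; lra|].
  destruct (archimed_cor1 e He) as [N [HN HN0]].
  destruct (fresh_index level_leaf level_leaf_inj l N) as [n [HNn [Hn Hfresh]]].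
  apply Hfresh, Hl.
  - split; [|apply level_leaf_special; exact Hn].
    exists (1, / INR n). split; [apply Zset_off_axis; lra | reflexivity].
  - exists (1, / INR n). split; [apply hcomp_refl, Zset_off_axis; lra|].
    rewrite dist_vertical.
    assert (0 < INR N) by (apply lt_0_INR; lia).
    assert (INR N <= INR n) by (apply le_INR; exact HNn).
    assert (/ INR n <= / INR N) by (apply Rinv_le_contravar; lra).
    assert (0 < / INR n) by (apply Rinv_0_lt_compat; lra).
    apply Rabs_def1; lra.
Qed.

Lemma existT_const_inj {A B : Type} (a a' : A) (b b' : B) :
  existT (fun _ => B) a b = existT (fun _ => B) a' b' -> a = a' /\ b = b'.
Proof.
  intros E. split.
  - exact (f_equal (@projT1 _ _) E).
  - exact (f_equal (fun s : {_ : A & B} => (projT2 s : B)) E).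
Qed.

Lemma point_isolated c a : exists g, 0 < g /\ (Rabs (c - a) < g -> a = c).
Proof.
  destruct (Req_EM_T a c) as [E|E].
  - exists 1. split; [lra | intros _; exact E].
  - exists (Rabs (c - a)). split; [apply Rabs_pos_lt; lra | intros H; lra].
Qed.

Lemma eq_of_arbitrarily_close a b g :
  0 < g -> (forall e, 0 < e <= g -> Rabs (a - b) < e) -> a = b.
Proof.
  intros Hg H. destruct (Req_EM_T a b) as [E|E]; [exact E|].
  assert (Hab : 0 < Rabs (a - b)) by (apply Rabs_pos_lt; lra).
  pose proof (Rmin_l g (Rabs (a - b) / 2)). pose proof (Rmin_r g (Rabs (a - b) / 2)).
  assert (0 < Rmin g (Rabs (a - b) / 2)) by (apply Rmin_glb_lt; lra).
  specialize (H (Rmin g (Rabs (a - b) / 2))). lra.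
Qed.

Lemma glued_partner_near BA BB fA fB p ps rho :
  closed_embedding_on BA fA -> closed_embedding_on BB fB ->
  BA p -> BB ps -> fA p = fB ps -> rho > 0 ->
  exists e, e > 0 /\ forall p' r, BA p' -> BB r -> fA p' = fB r ->
    dist p p' < e -> dist ps r < rho.
Proof.
  intros (_ & HcontA & _) (_ & _ & HinvB & _) Hp Hps E Hrho.
  destruct (HinvB ps Hps rho Hrho) as [del [Hdel Hnear]].
  destruct (HcontA p Hp del Hdel) as [e [He Hclose]].
  exists e. split; [exact He|]. intros p' r Hp' Hr E' Hd.
  apply Hnear; [exact Hr|]. rewrite <- E, <- E'. exact (Hclose p' Hp' Hd).
Qed.

Section StripedAtlas.

Variables (I : Type) (u v : I -> R) (S : I -> pt -> Prop) (q : I -> pt -> pt)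
  (G : Type) (X Y : G -> I * (pt -> Prop)).
Hypothesis atlas : is_striped_atlas I u v S q G X Y.
Hypothesis canonical_leaves_are_leaves :
  forall w, canonical_leaf I u v S q w -> is_leaf w.

Definition interior k (p : pt) : Prop := u k < snd p < v k.

Definition on_bdry k (p : pt) : Prop := snd p = u k \/ snd p = v k.

Definition bdry_interval (a : I * (pt -> Prop)) : Prop :=
  is_bdry_int (u (fst a)) (v (fst a)) (S (fst a)) (snd a).

Definition glued_pair (A B : G -> I * (pt -> Prop)) : Prop :=
  (forall g, bdry_interval (A g)) /\
  (forall g, bdry_interval (B g)) /\
  (forall g g', A g = A g' -> g = g') /\
  (forall g p, snd (A g) p ->
     exists p', snd (B g) p' /\ q (fst (A g)) p = q (fst (B g)) p') /\
  (forall g, closed_embedding_on (snd (A g)) (q (fst (A g)))) /\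
  (forall g, closed_embedding_on (snd (B g)) (q (fst (B g)))).

Lemma atlas_strip i : is_strip (u i) (v i) (S i).
Proof. destruct atlas as (_ & H & _). apply H. Qed.

Lemma atlas_in_Z i p : S i p -> Zset (q i p).
Proof. destruct atlas as (_ & _ & H & _). apply H. Qed.

Lemma atlas_surj z : Zset z -> exists i p, S i p /\ q i p = z.
Proof. destruct atlas as (_ & _ & _ & H & _). apply H. Qed.

Lemma atlas_open (U : pt -> Prop) : (forall z, U z -> Zset z) ->
  (forall i p, S i p -> U (q i p) -> exists eps, eps > 0 /\
     forall p', S i p' -> dist p p' < eps -> U (q i p')) ->
  is_open U.
Proof. destruct atlas as (_ & _ & _ & _ & H & _). intros HU. apply H, HU. Qed.

Lemma atlas_glued_XY : glued_pair X Y.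
Proof.
  destruct atlas as (_ & _ & _ & _ & _ & HX & HY & HXi & _ & _ & HXY & _ & HXe & HYe & _).
  exact (conj HX (conj HY (conj HXi (conj HXY (conj HXe HYe))))).
Qed.

Lemma atlas_glued_YX : glued_pair Y X.
Proof.
  destruct atlas as (_ & _ & _ & _ & _ & HX & HY & _ & HYi & _ & _ & HYX & HXe & HYe & _).
  refine (conj HY (conj HX (conj HYi (conj _ (conj HYe HXe))))).
  intros g p Hp. destruct (HYX g p Hp) as [p' [Hp' E]]. exists p'. auto.
Qed.

Lemma atlas_identifies_glued i p k r : S i p -> S k r -> q i p = q k r ->
  existT (fun _ => pt) i p <> existT (fun _ => pt) k r ->
  exists g, (fst (X g) = i /\ snd (X g) p /\ fst (Y g) = k /\ snd (Y g) r) \/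
            (fst (Y g) = i /\ snd (Y g) p /\ fst (X g) = k /\ snd (X g) r).
Proof. destruct atlas as (_ & _ & _ & _ & _ & _ & _ & _ & _ & _ & _ & _ & _ & _ & H). apply H. Qed.

Lemma strip_snd_bounds i p : S i p -> u i <= snd p <= v i.
Proof. destruct (atlas_strip i) as (_ & _ & H & _). apply H. Qed.

Lemma interior_in_strip i p : interior i p -> S i p.
Proof. destruct (atlas_strip i) as (_ & H & _). destruct p. apply H. Qed.

Lemma interior_point_unique k p k' p' :
  S k p -> interior k p -> S k' p' -> q k p = q k' p' -> k = k' /\ p = p'.
Proof.
  intros Sp Hint Sp' E.
  destruct (classic (existT (fun _ => pt) k p = existT (fun _ => pt) k' p')) as [E'|E'].
  - exact (existT_const_inj _ _ _ _ E').
  - exfalso. unfold interior in Hint.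
    destruct (atlas_identifies_glued k p k' p' Sp Sp' E E')
      as [g [(<- & Hp & _) | (<- & Hp & _)]].
    + destruct (bdry_int_mem (proj1 atlas_glued_XY g) Hp) as [_ [Hb|Hb]]; lra.
    + destruct (bdry_int_mem (proj1 atlas_glued_YX g) Hp) as [_ [Hb|Hb]]; lra.
Qed.

Definition tame_ball k p d : Prop :=
  0 < d /\
  (forall r, u k <= snd r <= v k -> dist p r < d -> S k r) /\
  (forall r, S k r -> on_bdry k r -> dist p r < d -> snd r = snd p).

Lemma tame_ball_exists k p eta : 0 < eta -> S k p ->
  exists d, d <= eta /\ tame_ball k p d.
Proof.
  intros Heta Sp. destruct (atlas_strip k) as (_ & _ & _ & Hopen).
  destruct (Hopen p Sp) as [e [He Hball]].
  destruct (point_isolated (snd p) (u k)) as [gu [Hgu Hu]].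
  destruct (point_isolated (snd p) (v k)) as [gv [Hgv Hv]].
  assert (Hd : 0 < Rmin (Rmin e eta) (Rmin gu gv)) by (repeat apply Rmin_glb_lt; lra).
  pose proof (Rmin_l (Rmin e eta) (Rmin gu gv)). pose proof (Rmin_r (Rmin e eta) (Rmin gu gv)).
  pose proof (Rmin_l e eta). pose proof (Rmin_r e eta).
  pose proof (Rmin_l gu gv). pose proof (Rmin_r gu gv).
  set (d := Rmin (Rmin e eta) (Rmin gu gv)) in *.
  exists d. split; [lra|]. split; [exact Hd|]. split.
  - intros r Hr Hpr. apply Hball; [exact Hr | lra].
  - intros r _ [Er|Er] Hpr; pose proof (dist_snd_le p r) as Hy; rewrite Er in *;
      [apply Hu | apply Hv]; lra.
Qed.

Lemma tame_ball_bdry_hcomp k p d p' : tame_ball k p d -> S k p -> S k p' ->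
  on_bdry k p' -> dist p p' < d -> hcomp (S k) p p'.
Proof.
  intros (_ & Hball & Hbd) Sp Sp' Hp' Hd.
  pose proof (Hbd p' Sp' Hp' Hd) as Es.
  split; [exact Sp|]. split; [exact Es|]. intros x Hx.
  apply Hball; [exact (strip_snd_bounds k p Sp)|].
  rewrite dist_same_height. apply Rle_lt_trans with (2 := Hd).
  eapply Rle_trans; [|apply dist_fst_le].
  unfold Rmin, Rmax in Hx. destruct Rle_dec; unfold Rabs; repeat destruct Rcase_abs; lra.
Qed.

Definition near_fibre eta z0 k r : Prop :=
  exists p d, S k p /\ q k p = z0 /\ d <= eta /\ tame_ball k p d /\ dist p r < d.

Definition near_preimages eta z0 z : Prop :=
  Zset z /\ forall k r, S k r -> q k r = z -> near_fibre eta z0 k r.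

Lemma near_fibre_open eta z0 k r : near_fibre eta z0 k r ->
  exists rho, rho > 0 /\ forall r', dist r r' < rho -> near_fibre eta z0 k r'.
Proof.
  intros [p [d (Sp & Ep & Heta & Hd & Hr)]]. exists (d - dist p r). split; [lra|].
  intros r' Hr'. exists p, d. do 4 (split; [assumption|]).
  pose proof (dist_triangle p r r'). lra.
Qed.

Lemma near_fibre_across_gluing A B eta z0 i p d :
  glued_pair A B -> S i p -> tame_ball i p d -> near_preimages eta z0 (q i p) ->
  exists e, e > 0 /\ forall g p' r, fst (A g) = i -> snd (A g) p' -> snd (B g) r ->
    q i p' = q (fst (B g)) r -> dist p p' < d -> dist p p' < e ->
    near_fibre eta z0 (fst (B g)) r.
Proof.
  intros (HA & HB & Ainj & Atransfer & Aemb & Bemb) Sp Hd [_ Hnear].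
  assert (Hside : forall g p', fst (A g) = i -> snd (A g) p' -> dist p p' < d ->
                    A g = (i, hcomp (S i) p)).
  { intros g p' Hi Hp' Hpp'.
    destruct (bdry_int_mem (HA g) Hp') as [Sp' Hbd]. rewrite Hi in Sp', Hbd.
    assert (Hc : hcomp (S i) p p') by (apply (tame_ball_bdry_hcomp i p d); auto).
    rewrite (surjective_pairing (A g)), (bdry_int_eq (HA g) Hp'), Hi, (hcomp_eq _ _ _ Hc).
    reflexivity. }
  destruct (classic (exists g, A g = (i, hcomp (S i) p))) as [[g0 Hg0] | Hnone].
  - assert (Hp : snd (A g0) p) by (rewrite Hg0; apply hcomp_refl; exact Sp).
    assert (Hi0 : fst (A g0) = i) by (rewrite Hg0; reflexivity).
    destruct (Atransfer g0 p Hp) as [ps [Hps Eps]].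
    destruct (bdry_int_mem (HB g0) Hps) as [Sps _].
    assert (Eps' : q (fst (B g0)) ps = q i p) by (rewrite <- Eps, Hi0; reflexivity).
    destruct (near_fibre_open _ _ _ _ (Hnear _ _ Sps Eps')) as [rho [Hrho Hball]].
    destruct (glued_partner_near _ _ _ _ p ps rho (Aemb g0) (Bemb g0) Hp Hps Eps Hrho)
      as [e [He Hpartner]].
    exists e. split; [exact He|]. intros g p' r Hi Hp' Hr Er Hpd Hpe.
    assert (g = g0) by (apply Ainj; rewrite Hg0; exact (Hside g p' Hi Hp' Hpd)).
    subst g. apply Hball, (Hpartner p' r Hp' Hr); [rewrite Hi0; exact Er | exact Hpe].
  - exists 1. split; [lra|]. intros g p' r Hi Hp' _ _ Hpd _.
    exfalso. apply Hnone. exists g. exact (Hside g p' Hi Hp' Hpd).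
Qed.

Lemma near_preimages_open eta z0 : is_open (near_preimages eta z0).
Proof.
  apply atlas_open; [intros z Hz; exact (proj1 Hz)|]. intros i p Sp Hz.
  destruct (near_fibre_open _ _ _ _ (proj2 Hz i p Sp eq_refl)) as [rho [Hrho Hball]].
  destruct (tame_ball_exists i p 1 Rlt_0_1 Sp) as [d [_ Hd]].
  destruct (near_fibre_across_gluing X Y eta z0 i p d atlas_glued_XY Sp Hd Hz)
    as [eXY [HeXY Hxy]].
  destruct (near_fibre_across_gluing Y X eta z0 i p d atlas_glued_YX Sp Hd Hz)
    as [eYX [HeYX Hyx]].
  pose proof (proj1 Hd) as Hd0.
  exists (Rmin (Rmin rho d) (Rmin eXY eYX)). split; [repeat apply Rmin_glb_lt; lra|].
  intros p' Sp' Hpp'. apply Rmin_Rgt in Hpp' as [H1 H2].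
  apply Rmin_Rgt in H1 as [Hprho Hpd]. apply Rmin_Rgt in H2 as [HpXY HpYX].
  split; [exact (atlas_in_Z i p' Sp')|]. intros k r Sr Er.
  destruct (classic (existT (fun _ => pt) i p' = existT (fun _ => pt) k r)) as [E|E].
  - destruct (existT_const_inj _ _ _ _ E) as [<- <-]. exact (Hball p' Hprho).
  - destruct (atlas_identifies_glued i p' k r Sp' Sr (eq_sym Er) E)
      as [g [(Hi & Hp' & <- & Hr) | (Hi & Hp' & <- & Hr)]].
    + exact (Hxy g p' r Hi Hp' Hr (eq_sym Er) Hpd HpXY).
    + exact (Hyx g p' r Hi Hp' Hr (eq_sym Er) Hpd HpYX).
Qed.

Lemma near_preimages_nbhd eta z0 : 0 < eta -> Zset z0 ->
  exists e, e > 0 /\ forall z k r, dist z0 z < e -> S k r -> q k r = z ->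
    near_fibre eta z0 k r.
Proof.
  intros Heta Hz0.
  assert (Hin : near_preimages eta z0 z0).
  { split; [exact Hz0|]. intros k r Sr Er.
    destruct (tame_ball_exists k r eta Heta Sr) as [d [Hdeta Hd]].
    exists r, d. do 4 (split; [assumption|]).
    unfold dist. rewrite !Rminus_diag, Rabs_R0, Rmax_left; [apply Hd | lra]. }
  destruct (near_preimages_open eta z0 z0 Hin) as [e [He Hball]].
  exists e. split; [exact He|]. intros z k r Hz Sr Er.
  exact (proj2 (Hball z Hz) k r Sr Er).
Qed.

Lemma strip_line_leaf j p z : interior j p ->
  (leaf_of (q j p) z <-> exists x, q j (x, snd p) = z).
Proof.
  intros Hint.
  assert (Hleaf : is_leaf (fun z => exists x, q j (x, snd p) = z)).
  { apply canonical_leaves_are_leaves. left. exists j, (snd p). split; [exact Hint | reflexivity]. }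
  rewrite <- (leaf_eq _ (q j p) Hleaf); [reflexivity|].
  exists (fst p). destruct p; reflexivity.
Qed.

Lemma bdry_int_leaf i B b z : is_bdry_int (u i) (v i) (S i) B -> B b ->
  (leaf_of (q i b) z <-> exists p, B p /\ q i p = z).
Proof.
  intros HB Hb.
  assert (Hleaf : is_leaf (fun z => exists p, B p /\ q i p = z)).
  { apply canonical_leaves_are_leaves. right. exists i, B. split; [exact HB | reflexivity]. }
  rewrite <- (leaf_eq _ (q i b) Hleaf); [reflexivity|].
  exists b. split; [exact Hb | reflexivity].
Qed.

Lemma mirror_preimage_close n j p eta : (1 <= n)%nat -> S j p ->
  q j p = (1, / INR n) -> 0 < eta -> u j + 2 * eta <= snd p <= v j - 2 * eta ->
  exists p', interior j p' /\ q j p' = (-1, / INR n) /\ Rabs (snd p' - snd p) < 2 * eta.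
Proof.
  intros Hn Sp Ep Heta Hp.
  assert (Hint : interior j p) by (unfold interior; lra).
  set (h := / INR n) in *.
  assert (Hh : 0 < h) by (apply Rinv_0_lt_compat, lt_0_INR; lia).
  destruct (near_preimages_nbhd eta (1, h) Heta (Zset_off_axis 1 h ltac:(lra)))
    as [e1 [He1 Near1]].
  destruct (near_preimages_nbhd eta (-1, h) Heta (Zset_off_axis (-1) h ltac:(lra)))
    as [e2 [He2 Near2]].
  destruct (exists_non_K_height_above n (Rmin e1 e2) Hn) as [y [Hy HK]].
  { apply Rmin_glb_lt; lra. }
  fold h in Hy. pose proof (Rmin_l e1 e2). pose proof (Rmin_r e1 e2).
  destruct (atlas_surj (1, y) (Zset_off_axis 1 y ltac:(lra))) as [k [r [Sr Er]]].
  destruct (Near1 (1, y) k r) as [p0 [d0 (Sp0 & Ep0 & Hd0eta & _ & Hr)]];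
    [rewrite dist_vertical; apply Rabs_def1; lra | exact Sr | exact Er |].
  destruct (interior_point_unique j p k p0 Sp Hint Sp0 (eq_trans Ep (eq_sym Ep0)))
    as [<- <-].
  assert (Hpr : Rabs (snd p - snd r) < eta) by (pose proof (dist_snd_le p r); lra).
  apply Rabs_def2 in Hpr as [Hpr1 Hpr2].
  assert (Hrint : interior j r) by (unfold interior; lra).
  destruct (proj1 (strip_line_leaf j r (-1, y) Hrint)) as [x Ex].
  { rewrite Er. apply leaf_of_full_line; exact HK. }
  destruct (Near2 (-1, y) j (x, snd r)) as [p' [d' (Sp' & Ep' & Hd'eta & _ & Hr')]];
    [rewrite dist_vertical; apply Rabs_def1; lra | apply interior_in_strip; exact Hrint
    | exact Ex |].
  assert (Hpr' : Rabs (snd p' - snd r) < eta) by (pose proof (dist_snd_le p' (x, snd r)); simpl in *; lra).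
  apply Rabs_def2 in Hpr' as [Hpr1' Hpr2'].
  exists p'. split; [unfold interior; lra|]. split; [exact Ep'|].
  apply Rabs_def1; lra.
Qed.

Lemma level_preimage_on_bdry n j p : (1 <= n)%nat -> S j p ->
  q j p = (1, / INR n) -> on_bdry j p.
Proof.
  intros Hn Sp Ep. apply NNPP. intros Hnb.
  assert (Hint : interior j p).
  { destruct (strip_snd_bounds j p Sp) as [[B1|B1] [B2|B2]];
      unfold interior; try lra; exfalso; apply Hnb; unfold on_bdry; auto. }
  set (gap := Rmin (snd p - u j) (v j - snd p)).
  assert (Hgap : 0 < gap) by (unfold interior in Hint; apply Rmin_glb_lt; lra).
  assert (Hrange : forall e, 0 < e <= gap -> u j + 2 * (e / 2) <= snd p <= v j - 2 * (e / 2)).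
  { intros e He. pose proof (Rmin_l (snd p - u j) (v j - snd p)).
    pose proof (Rmin_r (snd p - u j) (v j - snd p)). unfold gap in He. lra. }
  destruct (mirror_preimage_close n j p (gap / 2) Hn Sp Ep ltac:(lra) (Hrange gap ltac:(lra)))
    as [p1 (Hp1 & Ep1 & _)].
  assert (Hc : snd p1 = snd p).
  { apply (eq_of_arbitrarily_close _ _ gap Hgap). intros e He.
    destruct (mirror_preimage_close n j p (e / 2) Hn Sp Ep ltac:(lra) (Hrange e He))
      as [p2 (Hp2 & Ep2 & Hclose)].
    destruct (interior_point_unique j p2 j p1 (interior_in_strip j p2 Hp2) Hp2
                (interior_in_strip j p1 Hp1) (eq_trans Ep2 (eq_sym Ep1))) as [_ ->].
    lra. }
  assert (Hmirror : leaf_of (1, / INR n) (-1, / INR n)).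
  { rewrite <- Ep. apply (strip_line_leaf j p _ Hint). exists (fst p1).
    rewrite <- Hc, <- Ep1. destruct p1; reflexivity. }
  apply leaf_of_right_half in Hmirror; [lra | apply K_height_inv; exact Hn | lra].
Qed.

Lemma no_striped_atlas : False.
Proof.
  destruct (near_preimages_nbhd 1 (1, 0) Rlt_0_1 (Zset_off_axis 1 0 ltac:(lra)))
    as [e [He Hnear]].
  destruct (archimed_cor1 e He) as [m [Hm Hm0]].
  assert (Hmi : 0 < / INR m) by (apply Rinv_0_lt_compat, lt_0_INR; lia).
  destruct (atlas_surj (1, / INR m) (Zset_off_axis 1 _ ltac:(lra))) as [i [b [Sb Eb]]].
  pose proof (level_preimage_on_bdry m i b ltac:(lia) Sb Eb) as Hb.
  destruct (Hnear (1, / INR m) i b) as [p [d (Sp & Ep & _ & Hd & Hpb)]];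
    [rewrite dist_vertical; apply Rabs_def1; lra | exact Sb | exact Eb |].
  assert (Hc : hcomp (S i) p b) by (apply (tame_ball_bdry_hcomp i p d); auto).
  assert (HB : is_bdry_int (u i) (v i) (S i) (hcomp (S i) p)).
  { exists p. split; [exact Sp|]. split; [|reflexivity].
    rewrite <- (hcomp_snd _ _ _ Hc). exact Hb. }
  assert (Hin : leaf_of (q i b) (1, 0)).
  { apply (bdry_int_leaf i _ b _ HB Hc). exists p. split; [apply hcomp_refl; exact Sp | exact Ep]. }
  rewrite Eb in Hin. apply hcomp_snd in Hin. simpl in Hin. lra.
Qed.

End StripedAtlas.

Theorem mainTheorem9 :
  (forall w, is_leaf w -> exists g : R -> pt, cross_section w g) /\
  ~ locally_finite (fun w => is_leaf w /\ special w) /\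
  (forall (I : Type) (u v : I -> R) (S : I -> pt -> Prop) (q : I -> pt -> pt)
          (G : Type) (X Y : G -> (I * (pt -> Prop))),
     is_striped_atlas I u v S q G X Y ->
     ~ (forall w, is_leaf w <-> canonical_leaf I u v S q w)).
Proof.
  split; [exact leaf_has_cross_section|].
  split; [exact special_leaves_not_locally_finite|].
  intros I u v S q G X Y Hatlas Hleaves.
  apply (no_striped_atlas I u v S q G X Y Hatlas).
  intros w Hw. apply Hleaves, Hw.
Qed.
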